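(* Let $G$ be an additive group, $K$ a field, $\widehat G$ a subgroup of finite index $n$ with cosets $G_0=\widehat G,G_1,\dots,G_{n-1}$. For any $t\in\widehat G$, any $f\in F^{per}_{t,\widehat G}$ and any $t'\in G_i$ ($1\le i\le n-1$) there exists $g\in F^{per}_{t',\widehat G}$ such that $L(f,t)\cong L(g,t')$.
   Context: $L(f,t)$ is the $K$-algebra with basis $\{e_a:a\in G\}$ and multiplication $e_ae_b=f(a,b)e_{a+b+t}$. A function $f:G\times G\to K$ is $\widehat G$-periodic if $f(a,b)$ depends only on the cosets of $\widehat G$ containing $a$ and $b$. $F^{per}_{t,\widehat G}$ is the set of $\widehat G$-periodic $f$ satisfying, for all $a,b,c\in G$, $$f(b,c)f(a,b+c+t)=f(a,b)f(a+b+t,c)-f(a,c)f(a+c+t,b)$$ (equivalently, $L(f,t)$ satisfies the right Leibniz identity $x(yz)=(xy)z-(xz)y$). *)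

From HB Require Import structures.
From mathcomp Require Import all_boot all_order all_algebra.
Set Implicit Arguments. Unset Strict Implicit. Unset Printing Implicit Defensive.
Import Order.TTheory GRing.Theory Num.Theory.
Local Open Scope ring_scope.

Section LAlg.
Variables (G : zmodType) (K : fieldType).

(* Elements of the algebra L(f,t): finitely supported functions G -> K,
   i.e. finite K-linear combinations sum_a x(a) e_a, packaged with a
   (not necessarily minimal) finite list containing their support. *)
Record fsfun := FSFun {
  fs_fun :> G -> K;
  fs_supp : seq G;
  fs_suppP : forall a, a \notin fs_supp -> fs_fun a = 0 }.

Definition fs_eq (x y : fsfun) : Prop := forall a, x a = y a.

Lemma fs_add_suppP (x y : fsfun) a :
  a \notin fs_supp x ++ fs_supp y -> x a + y a = 0.
Proof.
rewrite mem_cat negb_or => /andP[hx hy].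
by rewrite (fs_suppP hx) (fs_suppP hy) addr0.
Qed.

Definition fs_add (x y : fsfun) : fsfun :=
  @FSFun (fun a => x a + y a) _ (@fs_add_suppP x y).

Lemma fs_scale_suppP (k : K) (x : fsfun) a :
  a \notin fs_supp x -> k * x a = 0.
Proof. by move=> h; rewrite (fs_suppP h) mulr0. Qed.

Definition fs_scale (k : K) (x : fsfun) : fsfun :=
  @FSFun (fun a => k * x a) _ (@fs_scale_suppP k x).

Lemma fs_basis_suppP (a c : G) :
  c \notin [:: a] -> (if c == a then 1 else 0 : K) = 0.
Proof. by rewrite inE => /negbTE ->. Qed.

Definition e_ (a : G) : fsfun :=
  @FSFun (fun c => if c == a then 1 else 0) _ (@fs_basis_suppP a).

(* Multiplication of L(f,t): e_a e_b = f(a,b) e_(a+b+t), extended bilinearly *)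
Definition Lmul_fun (f : G -> G -> K) (t : G) (x y : fsfun) (c : G) : K :=
  \sum_(a <- undup (fs_supp x))
    \sum_(b <- undup (fs_supp y) | a + b + t == c) x a * y b * f a b.

Lemma Lmul_suppP f t (x y : fsfun) c :
  c \notin [seq a + b + t | a <- fs_supp x, b <- fs_supp y] ->
  Lmul_fun f t x y c = 0.
Proof.
move=> hc; rewrite /Lmul_fun big_seq big1 // => a; rewrite mem_undup => ha.
rewrite big_seq_cond big1 // => b /andP[]; rewrite mem_undup => hb /eqP hab.
by move: hc; rewrite -hab; move/negP; case; apply/allpairsP; exists (a, b).
Qed.

Definition Lmul f t (x y : fsfun) : fsfun :=
  @FSFun (Lmul_fun f t x y) _ (@Lmul_suppP f t x y).

Definition L_iso (f : G -> G -> K) (t : G) (g : G -> G -> K) (t' : G)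
    (phi : fsfun -> fsfun) : Prop :=
  (forall x y, fs_eq x y -> fs_eq (phi x) (phi y)) /\
  (forall x y, fs_eq (phi (fs_add x y)) (fs_add (phi x) (phi y))) /\
  (forall k x, fs_eq (phi (fs_scale k x)) (fs_scale k (phi x))) /\
  (forall x y, fs_eq (phi x) (phi y) -> fs_eq x y) /\
  (forall y, exists x, fs_eq (phi x) y) /\
  (forall x y, fs_eq (phi (Lmul f t x y)) (Lmul g t' (phi x) (phi y))).

Definition L_isomorphic f t g t' : Prop := exists phi, L_iso f t g t' phi.

Definition periodic (H : {pred G}) (f : G -> G -> K) : Prop :=
  forall a a' b b', a - a' \in H -> b - b' \in H -> f a b = f a' b'.

Definition F_per (t : G) (H : {pred G}) (f : G -> G -> K) : Prop :=
  periodic H f /\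
  forall a b c : G,
    f b c * f a (b + c + t) = f a b * f (a + b + t) c - f a c * f (a + c + t) b.

End LAlg.

From HB Require Import structures.
From mathcomp Require Import all_boot all_order all_algebra.
Set Implicit Arguments. Unset Strict Implicit. Unset Printing Implicit Defensive.
Import GRing.Theory.
Local Open Scope ring_scope.

(* Indeed the
   linear map e_a |-> e_(a-d) sends the product f(a,b) e_(a+b+t) to
   f(a,b) e_(a+b+t-d), which is exactly e_(a-d) e_(b-d) computed in
   L(f_d, d + t).  Translation by d preserves H-periodicity and turns the
   right Leibniz identity for (f,t) into the one for (f_d, d + t). *)

Section Translation.
Variables (G : zmodType) (K : fieldType) (d : G).

Definition twist (f : G -> G -> K) : G -> G -> K := fun a b => f (a + d) (b + d).

Lemma twist_index (a b t : G) : a - d + (b - d) + (d + t) = a + b + t - d.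
Proof.
rewrite -!addrA; congr (_ + _).
by rewrite addrCA; congr (_ + _); rewrite addKr addrC.
Qed.

Lemma twist_index_shift (u v t : G) : u + v + (d + t) + d = u + d + (v + d) + t.
Proof.
rewrite -!addrA; congr (_ + _).
by rewrite addrCA; congr (_ + _); rewrite (addrC t).
Qed.

Lemma twist_F_per (t : G) (H : {pred G}) (f : G -> G -> K) :
  F_per t H f -> F_per (d + t) H (twist f).
Proof.
case=> hper hid; split=> [a a' b b' ha hb | a b c].
  by apply: hper; rewrite opprD addrACA subrr addr0.
by rewrite /twist !twist_index_shift hid.
Qed.

Lemma translate_suppP (x : fsfun G K) a :
  a \notin [seq b - d | b <- fs_supp x] -> x (a + d) = 0.
Proof.
move=> h; apply: fs_suppP; apply: contra h => hx.
by rewrite -[a](addrK d); apply: map_f.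
Qed.

Definition translate (x : fsfun G K) : fsfun G K :=
  @FSFun G K (fun a => x (a + d)) _ (@translate_suppP x).

Lemma untranslate_suppP (x : fsfun G K) a :
  a \notin [seq b + d | b <- fs_supp x] -> x (a - d) = 0.
Proof.
move=> h; apply: fs_suppP; apply: contra h => hx.
by rewrite -[a](subrK d); apply: map_f.
Qed.

Definition untranslate (x : fsfun G K) : fsfun G K :=
  @FSFun G K (fun a => x (a - d)) _ (@untranslate_suppP x).

(* Translation is multiplicative from L(f,t) to L(f_d, d+t): both sides
   sum over the same pairs of supports, reindexed by b |-> b - d. *)
Lemma translate_mul (f : G -> G -> K) (t : G) (x y : fsfun G K) :
  fs_eq (translate (Lmul f t x y))
        (Lmul (twist f) (d + t) (translate x) (translate y)).
Proof.
move=> c; rewrite /= /Lmul_fun /=.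
have sub_inj : injective (fun b : G => b - d) by apply: addIr.
rewrite !(undup_map_inj sub_inj) big_map; apply: eq_bigr => a _.
rewrite big_map; apply: eq_big => [b | b _].
  by rewrite twist_index subr_eq.
by rewrite /twist !subrK.
Qed.

Lemma translate_iso (f : G -> G -> K) (t : G) :
  L_iso f t (twist f) (d + t) translate.
Proof.
split; [|split; [|split; [|split; [|split]]]].
- by move=> x y exy a; apply: exy.
- by [].
- by [].
- by move=> x y exy a; have := exy (a - d); rewrite /= subrK.
- by move=> y; exists (untranslate y) => a; rewrite /= addrK.
- exact: translate_mul.
Qed.

End Translation.

(* H is the subgroup \widehat G of index n; reps`_i is a representative of
   the coset G_i, with G_0 = H. *)
Theorem proposition4p3 (G : zmodType) (K : fieldType) (H : {pred G})
  (H_sub : zmod_closed H) (n : nat) (reps : seq G)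
  (H_size : size reps = n)
  (H_G0 : reps`_0 \in H)
  (H_distinct : forall i j, (i < n)%N -> (j < n)%N ->
      reps`_i - reps`_j \in H -> i = j)
  (H_cover : forall a : G, exists2 i, (i < n)%N & a - reps`_i \in H)
  (t : G) (ht : t \in H) (f : G -> G -> K) (hf : F_per t H f)
  (i : nat) (hi1 : (1 <= i)%N) (hin : (i <= n.-1)%N)
  (t' : G) (ht' : t' - reps`_i \in H) :
  exists g : G -> G -> K, F_per t' H g /\ L_isomorphic f t g t'.
Proof.
have -> : t' = (t' - t) + t by rewrite subrK.
exists (twist (t' - t) f); split; first exact: twist_F_per.
by exists (@translate G K (t' - t)); apply: translate_iso.
Qed.
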